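(* Consider the parallel multiple access channel power allocation game with $K$ users and $A$ nodes, as described in the context, with random channel gains. If $p\in\Delta$ is a Nash equilibrium, then almost surely $\sum_{k\in\mathcal{K}}\bigl(|\mathrm{supp}(p_k)|-1\bigr)\le A-1$; that is, there are at most $A-1$ instances of waterfilling (an instance being an edge of a multigraph representing $p$, i.e. a pair of nodes both employed by the same user, with one of them the user's hub).
   Context: Setting: users $\mathcal{K}=\{1,\dots,K\}$, nodes $\mathcal{A}=\{1,\dots,A\}$. User $k$ has maximum power $P_k>0$ and strategy set $\Delta_k=\{p_k\in\mathbb{R}^{\mathcal{A}}: p_{k\alpha}\ge 0,\ \sum_\alpha p_{k\alpha}=P_k\}$; $\Delta=\prod_k\Delta_k$. Payoffs: $u_k(p)=\sum_{\alpha} b_\alpha\log\bigl(1+\frac{g_{k\alpha}p_{k\alpha}}{\sigma_\alpha^2+\sum_{\ell\neq k}g_{\ell\alpha}p_{\ell\alpha}}\bigr)$ with constants $b_\alpha>0$, $\sigma_\alpha^2>0$ and random channel gains $g_{k\alpha}>0$ drawn from a continuous (nonatomic) probability distribution on the positive reals; ''almost surely'' refers to their law. $q\in\Delta$ is a Nash equilibrium if $u_k(q)\ge u_k(q_{-k};q_k')$ for all $k$ and $q_k'\in\Delta_k$. $\mathrm{supp}(p_k)=\{\alpha:p_{k\alpha}>0\}$. A multigraph on vertex set $\mathcal{A}$ represents $p$ if for each user $k$ one chooses a hub $\alpha\in\mathrm{supp}(p_k)$ and adds an edge from $\alpha$ to each $\beta\in\mathrm{supp}(p_k)\setminus\{\alpha\}$.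 *)

From HB Require Import structures.
From mathcomp Require Import all_boot all_order all_algebra.
From mathcomp Require Import all_classical all_reals all_analysis.
Set Implicit Arguments. Unset Strict Implicit. Unset Printing Implicit Defensive.
Import Order.TTheory GRing.Theory Num.Theory.
Local Open Scope ring_scope.

(* A power profile: p k a = power user k puts on node a. *)
Definition profile (R : realType) (K A : nat) := 'I_K -> 'I_A -> R.

Definition in_Delta_k (R : realType) (A : nat) (Pk : R) (q : 'I_A -> R) : Prop :=
  (forall a, 0 <= q a) /\ \sum_(a < A) q a = Pk.

Definition in_Delta (R : realType) (K A : nat) (P : 'I_K -> R) (p : profile R K A) : Prop :=
  forall k, in_Delta_k (P k) (p k).

Definition payoff (R : realType) (K A : nat) (b sigma2 : 'I_A -> R)
    (g : 'I_K -> 'I_A -> R) (p : profile R K A) (k : 'I_K) : R :=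
  \sum_(a < A) b a * ln (1 + g k a * p k a /
                           (sigma2 a + \sum_(l < K | l != k) g l a * p l a)).

Definition deviate (R : realType) (K A : nat) (p : profile R K A) (k : 'I_K)
    (q : 'I_A -> R) : profile R K A :=
  fun l => if l == k then q else p l.

Definition nash_eq (R : realType) (K A : nat) (P : 'I_K -> R) (b sigma2 : 'I_A -> R)
    (g : 'I_K -> 'I_A -> R) (p : profile R K A) : Prop :=
  in_Delta P p /\
  forall k (q : 'I_A -> R), in_Delta_k (P k) q ->
    payoff b sigma2 g (deviate p k q) k <= payoff b sigma2 g p k.

Definition supp (R : realType) (A : nat) (q : 'I_A -> R) : {set 'I_A} :=
  [set a | 0 < q a].

From HB Require Import structures.
From mathcomp Require Import all_boot all_order all_algebra.
From mathcomp Require Import all_classical all_reals all_analysis.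
From mathcomp Require Import ring lra zify.
Import Order.TTheory GRing.Theory Num.Theory.
Set Implicit Arguments. Unset Strict Implicit. Unset Printing Implicit Defensive.
Local Open Scope ring_scope.

(* At a Nash equilibrium no user gains by shifting a little power between two nodes it
   uses; letting the amount tend to zero, the marginal utilities [b a * g k a / W a] of user
   [k] ([W a] the total power received at node [a]) coincide on its support.  Hence
   [ln (g k a) = x a + y k] on the set [E] of pairs [(k, a)] with [p k a > 0].  Since the
   incidence matrix of such pairs has [K + A] columns and kernel vector [(1, -1)], when
   [#|E| >= K + A], i.e. [\sum_k (|supp p_k| - 1) >= A], some nontrivial linear combination
   of the [ln (g k a)] over [E] vanishes.  That determines one gain as a function of the
   others, an event of probability zero: the gain is independent of the others and its law
   has no atoms. *)

Lemma ln_sub_ln_ge (R : realType) (u v : R) : 0 < u -> 0 < v -> (u - v) / u <= ln u - ln v.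
Proof.
move=> u0 v0; have := expR_ge1Dx (ln (v / u)).
rewrite lnK ?posrE ?divr_gt0 // ln_div ?posrE // mulrBl divff ?gt_eqF //.
lra.
Qed.

Lemma le_of_le_add_small (R : realFieldType) (x y c m : R) : 0 < m -> 0 <= c ->
  (forall e, 0 < e -> e <= m -> x <= y + e * c) -> x <= y.
Proof.
move=> m0 c0 small; apply/ler_addgt0Pr => eps eps0.
pose e := Num.min m (eps / (c + 1)).
have e0 : 0 < e by rewrite lt_min m0 divr_gt0 //; lra.
have em : e <= m by rewrite ge_min lexx.
have ec : e * c <= eps.
  have : e <= eps / (c + 1) by rewrite ge_min lexx orbT.
  rewrite ler_pdivlMr; last lra.
  nra.
by apply: le_trans (small e e0 em) _; rewrite lerD2l.
Qed.

Lemma sumrB_two_points (R : zmodType) (I : finType) (F G : I -> R) (a a' : I) :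
  a != a' -> (forall x, x != a -> x != a' -> F x = G x) ->
  \sum_x F x - \sum_x G x = (F a - G a) + (F a' - G a').
Proof.
move=> aa' FG; rewrite -sumrB (bigD1 a) //= (bigD1 a') 1?eq_sym //= big1 ?addr0 //.
by move=> x /andP [xa' xa]; rewrite FG // subrr.
Qed.

Lemma exists_inv_lt (R : archiFieldType) (e : R) : 0 < e -> exists n : nat, n.+1%:R^-1 < e.
Proof.
move=> e0; exists (Num.trunc e^-1).
by rewrite invf_plt ?posrE ?ltr0n //; exact: truncnS_gt.
Qed.

Lemma invSn_nonincreasing (R : numFieldType) :
  {homo (fun n : nat => n.+1%:R^-1 : R) : n m / (n <= m)%N >-> m <= n}.
Proof. by move=> n m nm; rewrite lef_pV2 ?posrE ?ltr0n // ler_nat. Qed.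

Lemma le0_of_forall_le_invSn (R : archiFieldType) (x : R) :
  (forall n : nat, x <= n.+1%:R^-1) -> x <= 0.
Proof.
move=> small; rewrite leNgt; apply/negP => x0.
by have [n nx] := exists_inv_lt x0; have := lt_le_trans nx (small n); rewrite ltxx.
Qed.

Lemma big_update (R : Type) (idx : R) (op : Monoid.com_law idx) (I J : finType)
    (i0 : I) (j0 : J) (f f' : I -> J -> R) :
  (forall i j, (i != i0) || (j != j0) -> f' i j = f i j) -> f i0 j0 = idx ->
  \big[op/idx]_i \big[op/idx]_j f' i j = op (f' i0 j0) (\big[op/idx]_i \big[op/idx]_j f i j).
Proof.
move=> ff' f_idx; rewrite [in LHS](bigD1 i0) //= [in RHS](bigD1 i0) //=.
rewrite [in LHS](bigD1 j0) //= [in RHS](bigD1 j0) //= f_idx Monoid.mul1m.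
rewrite (eq_bigr (f i0)); last by move=> j j_j0; rewrite ff' // j_j0 orbT.
rewrite [X in op _ X](eq_bigr (fun i => \big[op/idx]_j f i j)) ?Monoid.mulmA //.
by move=> i i_i0; apply: eq_bigr => j _; rewrite ff' // i_i0.
Qed.

(* The pairs [(k, a)] with [p k a > 0]: besides the hub of each user, every such pair is an
   edge of a multigraph representing [p]. *)
Definition support_pairs (R : realType) (K A : nat) (p : profile R K A) : {set 'I_K * 'I_A} :=
  [set e | e.2 \in supp (p e.1)].

Definition additive_on (R : zmodType) (I J : finType) (E : {set I * J}) (f : I -> J -> R) :=
  exists (x : J -> R) (y : I -> R), forall i j, (i, j) \in E -> f i j = x j + y i.

Lemma deviate_self (R : realType) (K A : nat) (p : profile R K A) k : deviate p k (p k) = p.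
Proof. by apply: funext => l; rewrite /deviate; case: eqP => // ->. Qed.

Lemma card_supp_gt0 (R : realType) (A : nat) (Pk : R) (q : 'I_A -> R) :
  0 < Pk -> in_Delta_k Pk q -> (0 < #|supp q|)%N.
Proof.
move=> Pk_gt0 [q_ge0 q_sum]; apply/card_gt0P; apply: contrapT => no_supp.
suff : \sum_a q a = 0 by rewrite q_sum => Pk0; move: Pk_gt0; rewrite Pk0 ltxx.
apply: big1 => a _; apply/eqP; rewrite eq_le q_ge0 andbT leNgt; apply/negP => qa.
by apply: no_supp; exists a; rewrite inE.
Qed.

Lemma card_support_pairs (R : realType) (K A : nat) (p : profile R K A) :
  #|support_pairs p| = (\sum_k #|supp (p k)|)%N.
Proof.
transitivity (\sum_k \sum_(a | a \in supp (p k)) 1)%N; last first.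
  by apply: eq_bigr => k _; rewrite sum1_card.
by rewrite pair_big_dep /= -sum1_card; apply: eq_bigl => e; rewrite inE.
Qed.

Lemma card_support_pairs_subn1 (R : realType) (K A : nat) (P : 'I_K -> R) (p : profile R K A) :
  (forall k, 0 < P k) -> in_Delta P p ->
  (\sum_k (#|supp (p k)| - 1) + K)%N = #|support_pairs p|.
Proof.
move=> P_gt0 p_Delta; rewrite card_support_pairs -[X in (_ + X)%N]card_ord -sum1_card -big_split /=.
by apply: eq_bigr => k _; rewrite subnK // (card_supp_gt0 (P_gt0 k) (p_Delta k)).
Qed.

Section NashEquilibrium.
Variables (R : realType) (K A : nat) (P : 'I_K -> R) (b s : 'I_A -> R)
  (g : 'I_K -> 'I_A -> R) (p : profile R K A).
Hypotheses (b_gt0 : forall a, 0 < b a) (s_gt0 : forall a, 0 < s a)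
  (g_gt0 : forall k a, 0 < g k a) (nash : nash_eq P b s g p).

Definition received_power a := s a + \sum_(l < K) g l a * p l a.

Definition interference k a := s a + \sum_(l < K | l != k) g l a * p l a.

Lemma nash_ge0 k a : 0 <= p k a.
Proof. by case: nash => /(_ k) [+ _] _; apply. Qed.

Lemma interference_gt0 k a : 0 < interference k a.
Proof.
apply: ltr_wpDr (s_gt0 a); apply: sumr_ge0 => l _.
by rewrite mulr_ge0 ?nash_ge0 ?ltW.
Qed.

Lemma received_power_gt0 a : 0 < received_power a.
Proof.
apply: ltr_wpDr (s_gt0 a); apply: sumr_ge0 => l _.
by rewrite mulr_ge0 ?nash_ge0 ?ltW.
Qed.

Lemma received_powerE k a : received_power a = interference k a + g k a * p k a.
Proof. by rewrite /received_power /interference (bigD1 k) //=; ring. Qed.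

Lemma payoff_deviate k q : (forall a, 0 <= q a) ->
  payoff b s g (deviate p k q) k =
  \sum_a b a * (ln (interference k a + g k a * q a) - ln (interference k a)).
Proof.
move=> q_ge0; apply: eq_bigr => a _; rewrite /deviate eqxx.
have -> : \sum_(l < K | l != k) g l a * (if l == k then q else p l) a =
          \sum_(l < K | l != k) g l a * p l a.
  by apply: eq_bigr => l lk; rewrite (negbTE lk).
have I0 := interference_gt0 k a; rewrite -/(interference k a) -ln_div ?posrE //.
  by rewrite mulrDl divff ?gt_eqF // addrC.
by rewrite ltr_wpDr // mulr_ge0 ?q_ge0 ?ltW.
Qed.

(* Moving power [e] of user [k] from node [a'] to node [a] cannot increase its payoff. *)
Lemma nash_transfer k a a' e : a != a' -> 0 < e -> e <= p k a' ->
  b a * (ln (received_power a + g k a * e) - ln (received_power a)) +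
  b a' * (ln (received_power a' - g k a' * e) - ln (received_power a')) <= 0.
Proof.
move=> aa' e0 ep.
have a'a : (a' == a) = false by rewrite eq_sym (negbTE aa').
pose q x := if x == a then p k a + e else if x == a' then p k a' - e else p k x.
have q_ge0 x : 0 <= q x.
  rewrite /q; case: ifP => _; first by have := nash_ge0 k a; lra.
  by case: ifP => _; [lra | exact: nash_ge0].
have qDelta : in_Delta_k (P k) q.
  case: nash => /(_ k) [_ <-] _; split => //; apply/eqP; rewrite -subr_eq0.
  rewrite (sumrB_two_points aa'); last by move=> x xa xa'; rewrite /q (negbTE xa) (negbTE xa').
  by rewrite /q eqxx a'a eqxx; apply/eqP; lra.
have := (proj2 nash) k q qDelta; rewrite -{2}(deviate_self p k).
rewrite payoff_deviate // payoff_deviate; last exact: nash_ge0.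
rewrite -subr_le0 (sumrB_two_points aa'); last first.
  by move=> x xa xa'; rewrite /q (negbTE xa) (negbTE xa').
rewrite /q eqxx a'a eqxx !(received_powerE k) -[_ + _ + g k a * e]addrA.
rewrite -[_ + _ - g k a' * e]addrA -[_ * p k a + _]mulrDr -[_ * p k a' - _]mulrBr => no_gain.
by apply: le_trans no_gain; rewrite le_eqVlt; apply/predU1P; left; ring.
Qed.

Lemma nash_transfer_cleared k a a' e : a != a' -> 0 < e -> e <= p k a' ->
  b a * g k a * (received_power a' - g k a' * e) <=
  b a' * g k a' * (received_power a + g k a * e).
Proof.
move=> aa' e0 ep; set W := received_power a; set W' := received_power a'.
have W0 : 0 < W := received_power_gt0 a; have W'0 : 0 < W' := received_power_gt0 a'.
have ga := g_gt0 k a; have ga' := g_gt0 k a'; have ba := b_gt0 a; have ba' := b_gt0 a'.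
have X0 : 0 < W + g k a * e by nra.
have Y0 : 0 < W' - g k a' * e.
  by rewrite /W' (received_powerE k); have := interference_gt0 k a'; nra.
have lnX := ln_sub_ln_ge X0 W0; have lnY := ln_sub_ln_ge Y0 W'0.
have : b a * ((W + g k a * e - W) / (W + g k a * e)) +
       b a' * ((W' - g k a' * e - W') / (W' - g k a' * e)) <= 0.
  apply: le_trans (nash_transfer aa' e0 ep).
  by apply: lerD; apply: ler_wpM2l => //; apply: ltW.
move=> /(ler_wpM2r (ltW (mulr_gt0 X0 Y0))); rewrite mul0r.
have -> : (b a * ((W + g k a * e - W) / (W + g k a * e)) +
           b a' * ((W' - g k a' * e - W') / (W' - g k a' * e))) *
          ((W + g k a * e) * (W' - g k a' * e)) =
          e * (b a * g k a * (W' - g k a' * e) - b a' * g k a' * (W + g k a * e)).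
  by field; rewrite !gt_eqF.
by rewrite pmulr_rle0 // subr_le0.
Qed.

Lemma nash_marginal_le k a a' : 0 < p k a' ->
  b a * g k a / received_power a <= b a' * g k a' / received_power a'.
Proof.
move=> pa'; have [<- // | aa'] := eqVneq a a'.
have W0 := received_power_gt0 a; have W'0 := received_power_gt0 a'.
have ga := g_gt0 k a; have ga' := g_gt0 k a'; have ba := b_gt0 a; have ba' := b_gt0 a'.
rewrite ler_pdivrMr // mulrAC ler_pdivlMr //.
apply: (@le_of_le_add_small _ _ _ (b a * g k a * g k a' + b a' * g k a' * g k a) (p k a')) => //.
  by rewrite addr_ge0 // !mulr_ge0 // ltW.
by move=> e e0 ep; have := nash_transfer_cleared aa' e0 ep; nra.
Qed.

(* The marginal utilities [b a * g k a / received_power a] of a user agree on its support,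
   which separates [ln (g k a)] into a node term and a user term. *)
Lemma nash_ln_additive : additive_on (support_pairs p) (fun k a => ln (g k a)).
Proof.
pose r k a := b a * g k a / received_power a.
have r_gt0 k a : 0 < r k a by rewrite divr_gt0 ?mulr_gt0 ?received_power_gt0.
have r_eq k a a' : 0 < p k a -> 0 < p k a' -> r k a = r k a'.
  by move=> pa pa'; apply: le_anti; rewrite !nash_marginal_le.
exists (fun a => ln (received_power a / b a)).
exists (fun k => if [pick a | 0 < p k a] is Some h then ln (r k h) else 0).
move=> k a; rewrite !inE /= => pa.
case: pickP => [h ph|]; last by move=> /(_ a); rewrite pa.
have W0 := received_power_gt0 a; have ba := b_gt0 a.
rewrite (r_eq k h a) // -lnM ?posrE ?divr_gt0 ?mulr_gt0 //; congr (ln _).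
by rewrite /r; field; rewrite !gt_eqF.
Qed.

End NashEquilibrium.

Lemma mul_delta_rows (R : pzSemiRingType) m n p (h : 'I_m -> 'I_n) (X : 'M[R]_(n, p)) i j :
  ((\matrix_i delta_mx 0 (h i) : 'M[R]_(m, n)) *m X) i j = X (h i) j.
Proof.
have := congr1 (fun B : 'rV_p => B 0 j) (row_mul i (\matrix_i delta_mx 0 (h i)) X).
by rewrite /= rowK -rowE !mxE.
Qed.

Lemma mxrank_lt_of_mul_eq0 (F : fieldType) m n (M : 'M[F]_(m, n)) (w : 'cV_n) :
  w != 0 -> M *m w = 0 -> (\rank M < n)%N.
Proof.
move=> w0 Mw.
have wker : (w^T <= kermx M^T)%MS by apply/sub_kermxP; rewrite -trmx_mul Mw trmx0.
have := mxrankS wker; rewrite mxrank_ker !mxrank_tr.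
have : \rank w != 0%N by rewrite mxrank_eq0.
lia.
Qed.

Lemma exists_nonzero_left_kernel (F : fieldType) m n (M : 'M[F]_(m, n)) :
  (\rank M < m)%N -> exists2 u : 'rV_m, u != 0 & u *m M = 0.
Proof.
move=> rkM; exists (nz_row (kermx M)); last exact/sub_kermxP/nz_row_sub.
by rewrite nz_row_eq0 kermx_eq0 /row_free neq_ltn rkM.
Qed.

Section IncidenceMatrix.
Variables (F : fieldType) (m n : nat) (E : {set 'I_m * 'I_n}).

Definition incidence_mx : 'M[F]_(#|E|, n + m) :=
  row_mx (\matrix_i delta_mx 0 (enum_val i).2) (\matrix_i delta_mx 0 (enum_val i).1).

Lemma incidence_mx_mul (X : 'cV_n) (Y : 'cV_m) i :
  (incidence_mx *m col_mx X Y) i 0 = X (enum_val i).2 0 + Y (enum_val i).1 0.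
Proof. by rewrite mul_row_col mxE !mul_delta_rows. Qed.

(* [(1, -1)] lies in the kernel, so the incidence matrix has rank below [n + m]. *)
Lemma additive_on_orthogonal : (0 < n)%N -> (m + n <= #|E|)%N ->
  exists2 u : 'rV[F]_#|E|, u != 0 & forall f, additive_on E f ->
    \sum_i u 0 i * f (enum_val i).1 (enum_val i).2 = 0.
Proof.
move=> n_gt0 mnE.
have rk : (\rank incidence_mx < #|E|)%N.
  suff : (\rank incidence_mx < n + m)%N by lia.
  apply: (@mxrank_lt_of_mul_eq0 _ _ _ _ (col_mx (const_mx 1) (const_mx (-1)))).
    apply/negP => /eqP /matrixP /(_ (lshift m (Ordinal n_gt0)) 0).
    by rewrite col_mxEu !mxE => /eqP; rewrite oner_eq0.
  by apply/matrixP => i j; rewrite ord1 incidence_mx_mul !mxE subrr.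
have [u u0 uM] := exists_nonzero_left_kernel rk.
exists u => // f [x [y fxy]].
have := congr1 (fun B => (B *m col_mx (\col_j x j) (\col_k y k)) 0 0) uM.
rewrite /= mul0mx -mulmxA !mxE => ortho; rewrite -[RHS]ortho; apply: eq_bigr => i _.
rewrite incidence_mx_mul !mxE fxy //.
by rewrite -surjective_pairing enum_valP.
Qed.

End IncidenceMatrix.

Local Open Scope classical_set_scope.

Section MonotoneMeasure.
Variables (d : measure_display) (T : measurableType d) (R : realType) (mu : probability T R).

Lemma nondecreasing_measure_le (S : nat -> set T) (U : set T) (t : \bar R) :
  (forall n, measurable (S n)) -> {homo S : n m / (n <= m)%N >-> (n <= m)%O} ->
  \bigcup_n S n = U -> (forall n, (mu (S n) <= t)%E) -> (mu U <= t)%E.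
Proof.
move=> mS S_nd <- le_t.
have cvg_mu := nondecreasing_cvg_mu (mu := mu) mS (bigcupT_measurable _ mS) S_nd.
by rewrite -(cvg_lim _ cvg_mu) //; apply: lime_le; [exact: cvgP cvg_mu | exact: nearW].
Qed.

Lemma nonincreasing_measure_ge (S : nat -> set T) (U : set T) (t : \bar R) :
  (forall n, measurable (S n)) -> {homo S : n m / (n <= m)%N >-> (m <= n)%O} ->
  \bigcap_n S n = U -> (forall n, (t <= mu (S n))%E) -> (t <= mu U)%E.
Proof.
move=> mS S_ni <- ge_t.
have fin : (mu (S 0%N) < +oo)%E by rewrite (le_lt_trans (probability_le1 _ _)) ?ltry.
have cvg_mu := nonincreasing_cvg_mu (mu := mu) fin mS (bigcapT_measurable mS) S_ni.
by rewrite -(cvg_lim _ cvg_mu) //; apply: lime_ge; [exact: cvgP cvg_mu | exact: nearW].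
Qed.

End MonotoneMeasure.

Section Quantile.
Variables (R : realType) (mu : probability R R).

Lemma in_itvNy (x y : R) : `]-oo, x] y <-> y <= x.
Proof. by rewrite /= in_itv /=. Qed.

Lemma le_measure_itvNy (x y : R) : x <= y -> (mu `]-oo, x] <= mu `]-oo, y])%E.
Proof.
move=> xy; apply: le_measure; rewrite ?inE; try exact: measurable_itv.
by move=> z /in_itvNy zx; apply/in_itvNy; apply: le_trans xy.
Qed.

Lemma lt_measure_itvNy (x y : R) : (mu `]-oo, x] < mu `]-oo, y])%E -> x < y.
Proof. by apply: contraTlt => /le_measure_itvNy; rewrite leNgt. Qed.

Lemma exists_measure_itvNy_ge (t : R) : t < 1 -> exists x, (t%:E <= mu `]-oo, x])%E.
Proof.
move=> t1; apply: contrapT => below.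
suff : (mu setT <= t%:E)%E by rewrite probability_setT lee_fin; lra.
apply: (@nondecreasing_measure_le _ _ _ _ (fun n => `]-oo, n%:R] : set R)).
- by move=> n; exact: measurable_itv.
- move=> n m nm; apply/subsetPset => x /in_itvNy xn; apply/in_itvNy.
  by apply: le_trans xn _; rewrite ler_nat.
- apply/seteqP; split => x // _.
  by exists (Num.trunc x).+1 => //; apply/in_itvNy/ltW; exact: truncnS_gt.
- move=> n; rewrite leNgt; apply/negP => tn; apply: below.
  by exists n%:R; apply: ltW.
Qed.

Lemma exists_measure_itvNy_lt (t : R) : 0 < t -> exists x, (mu `]-oo, x] < t%:E)%E.
Proof.
move=> t0; apply: contrapT => above.
suff : (t%:E <= mu set0)%E by rewrite measure0 lee_fin; lra.
apply: (@nonincreasing_measure_ge _ _ _ _ (fun n => `]-oo, - n%:R] : set R)).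
- by move=> n; exact: measurable_itv.
- move=> n m nm; apply/subsetPset => x /in_itvNy xn; apply/in_itvNy.
  by apply: le_trans xn _; rewrite lerN2 ler_nat.
- apply/seteqP; split => x //= x_below.
  have := x_below (Num.trunc (- x)).+1 I => /in_itvNy.
  by have := truncnS_gt (- x); lra.
- move=> n; rewrite leNgt; apply/negP => nt; apply: above.
  by exists (- n%:R).
Qed.

Hypothesis mu_nonatomic : forall x : R, mu [set y : R | y = x] = 0%E.

Lemma measure_itvNyo (x : R) : mu `]-oo, x[ = mu `]-oo, x].
Proof.
have -> : `]-oo, x] = `]-oo, x[ `|` [set y | y = x].
  apply/seteqP; split => y /=; rewrite !in_itv /=.
    by rewrite le_eqVlt => /orP [/eqP ->|]; [right | left].
  by move=> [/ltW|->].
have point : measurable [set y : R | y = x].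
  by rewrite (_ : [set y | y = x] = [set x]) //; exact: measurable_set1.
rewrite measureU //; first by move: (mu_nonatomic x) => /= ->; rewrite adde0.
by apply/seteqP; split => y //= []; rewrite in_itv /= => + yx; rewrite yx ltxx.
Qed.

(* [q] is the infimum of the [x] with [t <= mu ]-oo, x]]: right continuity gives
   [t <= mu ]-oo, q]], and as [mu] has no atoms, [mu ]-oo, q] = mu ]-oo, q[ <= t]. *)
Lemma exists_quantile (t : R) : 0 < t < 1 -> exists q, mu `]-oo, q] = t%:E.
Proof.
move=> /andP [t0 t1].
pose Q := [set x | (t%:E <= mu `]-oo, x])%E].
have Q0 : Q !=set0 by have [x] := exists_measure_itvNy_ge t1; exists x.
have [m mt] := exists_measure_itvNy_lt t0.
have Qm : lbound Q m.
  move=> x Qx; rewrite leNgt; apply/negP => xm.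
  by have := le_trans Qx (le_measure_itvNy (ltW xm)); rewrite leNgt mt.
pose q := inf Q; exists q; apply/eqP; rewrite eq_le; apply/andP; split; last first.
  apply: (@nonincreasing_measure_ge _ _ _ _ (fun n => `]-oo, q + n.+1%:R^-1] : set R)).
  - by move=> n; exact: measurable_itv.
  - move=> n k nk; apply/subsetPset => x /in_itvNy xn; apply/in_itvNy.
    by apply: le_trans xn _; rewrite lerD2l; apply: invSn_nonincreasing.
  - apply/seteqP; split => x /= x_le; last first.
      by move=> n _; apply/in_itvNy; move/in_itvNy: x_le => xq; rewrite ler_wpDr.
    apply/in_itvNy; rewrite leNgt; apply/negP => qx.
    have [n nqx] := @exists_inv_lt _ (x - q) ltac:(by rewrite subr_gt0).
    by move: nqx (x_le n I) => /[swap] /in_itvNy; move: (n.+1%:R^-1) => z; lra.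
  - move=> n; have [y Qy yq] := inf_lt Q0 (x := q + n.+1%:R^-1) ltac:(by rewrite ltrDl).
    exact: le_trans Qy (le_measure_itvNy (ltW yq)).
rewrite -measure_itvNyo.
apply: (@nondecreasing_measure_le _ _ _ _ (fun n => `]-oo, q - n.+1%:R^-1] : set R)).
- by move=> n; exact: measurable_itv.
- move=> n k nk; apply/subsetPset => x /in_itvNy xn; apply/in_itvNy.
  by apply: le_trans xn _; rewrite lerD2l lerN2; apply: invSn_nonincreasing.
- apply/seteqP; split => x /=.
    move=> [n _ /in_itvNy xn]; rewrite in_itv /=.
    by apply: le_lt_trans xn _; rewrite gtrDl oppr_lt0.
  rewrite in_itv /= => xq.
  have [n nqx] := @exists_inv_lt _ (q - x) ltac:(by rewrite subr_gt0).
  by exists n => //; apply/in_itvNy; move: nqx; move: (n.+1%:R^-1) => z; lra.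
- move=> n; rewrite leNgt; apply/negP => tn.
  have : q <= q - n.+1%:R^-1 by apply: ge_inf; [exists m | exact: ltW].
  by rewrite lerDl oppr_ge0 invr_le0 lern0.
Qed.

End Quantile.

Lemma chain_cells (T : Type) (N : nat) (cut : nat -> set T) :
  cut 0%N = set0 -> cut N = setT -> (forall i j, (i <= j)%N -> cut i `<=` cut j) ->
  (forall x, exists i : 'I_N, (cut i.+1 `\` cut i) x) /\
  (forall (i j : 'I_N) x, (cut i.+1 `\` cut i) x -> (cut j.+1 `\` cut j) x -> i = j).
Proof.
move=> cut0 cutN cut_nd; split.
  move=> x; have ex_cut : exists n, `[< cut n x >] by exists N; rewrite cutN; apply/asboolP.
  case: (ex_minnP ex_cut) => n /asboolP cut_n n_min.
  have n_gt0 : (0 < n)%N by case: n cut_n {n_min} => //; rewrite cut0.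
  have nN : (n.-1 < N)%N by have := n_min N; rewrite cutN => /(_ (asboolT I)); lia.
  exists (Ordinal nN); rewrite /= prednK //; split => // cut_n1.
  by have := n_min n.-1 (asboolT cut_n1); lia.
suff lt_cells (i j : 'I_N) x :
    (i < j)%N -> (cut i.+1 `\` cut i) x -> (cut j.+1 `\` cut j) x -> False.
  move=> i j x xi xj; apply: val_inj; case: (ltngtP i j) => // ij.
    by case: (lt_cells _ _ _ ij xi xj).
  by case: (lt_cells _ _ _ ij xj xi).
by move=> ij [xi _] [_]; apply; exact: cut_nd xi.
Qed.

Section NonatomicPartition.
Variables (R : realType) (mu : probability R R).
Hypothesis mu_nonatomic : forall x : R, mu [set y : R | y = x] = 0%E.

Lemma nonatomic_partition (N : nat) : (0 < N)%N -> exists C : 'I_N -> set R,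
  [/\ forall i, measurable (C i), forall x, exists i, C i x,
      forall i j x, C i x -> C j x -> i = j & forall i, mu (C i) = (N%:R^-1)%:E].
Proof.
move=> N_gt0; have N0 : (0 : R) < N%:R by rewrite ltr0n.
have /choice [q qP] : forall i, exists q, (0 < i < N)%N -> mu `]-oo, q] = (i%:R / N%:R)%:E.
  move=> i; case: (boolP (0 < i < N)%N) => iN; last by exists 0.
  have [|x xq] := @exists_quantile R mu mu_nonatomic (i%:R / N%:R); last by exists x.
  apply/andP; split; first by rewrite divr_gt0 ?ltr0n //; lia.
  by rewrite ltr_pdivrMr // mul1r ltr_nat; lia.
pose cut i : set R := if i == 0%N then set0 else if (i < N)%N then `]-oo, q i] else setT.
have mcut i : measurable (cut i).
  by rewrite /cut; case: ifP => _ //; case: ifP => _ //; exact: measurable_itv.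
have mu_cut i : (i <= N)%N -> mu (cut i) = (i%:R / N%:R)%:E.
  rewrite /cut; case: eqP => [-> _|/eqP i0 iN]; first by rewrite measure0 mul0r.
  case: ifP => iN'; first by rewrite qP //; lia.
  by rewrite probability_setT (_ : i = N) ?divff ?gt_eqF //; lia.
have cut_nd i j : (i <= j)%N -> cut i `<=` cut j.
  move=> ij x; rewrite /cut; have [// | i0] := eqVneq i 0%N.
  have j0 : (j == 0%N) = false by apply/eqP; lia.
  rewrite j0; have [jN | //] := ltnP j N.
  rewrite (leq_ltn_trans ij jN) => /in_itvNy xi; apply/in_itvNy; apply: le_trans xi _.
  move: ij; rewrite leq_eqVlt => /orP [/eqP -> //|ij]; apply/ltW/(@lt_measure_itvNy _ mu).
  by rewrite !qP ?lte_fin ?ltr_pM2r ?invr_gt0 ?ltr_nat // ?jN ?andbT; lia.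
have cutN : cut N = setT by rewrite /cut ltnn gtn_eqF.
have [cover disjoint] := chain_cells (erefl : cut 0%N = set0) cutN cut_nd.
exists (fun i => cut i.+1 `\` cut i); split => // i.
  exact: measurableD.
rewrite measureD //.
  have -> : cut i.+1 `&` cut i = cut i by apply/setIidr/cut_nd.
  move: (mu_cut i.+1 (ltn_ord i)) (mu_cut i (ltnW (ltn_ord i))) => /= -> ->.
  by rewrite -EFinB -mulrBl -natrB // subSnn mul1r.
by rewrite (le_lt_trans (probability_le1 _ _)) ?ltry.
Qed.

End NonatomicPartition.

Section GainIndependence.
Variables (R : realType) (K A : nat) (d : measure_display) (T : measurableType d)
  (Pr : probability T R) (mu : probability R R) (g : 'I_K -> 'I_A -> T -> R).
Hypothesis g_meas : forall k a, measurable_fun setT (g k a).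
Hypothesis g_iid : forall B : 'I_K -> 'I_A -> set R,
  (forall k a, measurable (B k a)) ->
  Pr [set w : T | forall k a, B k a (g k a w)] = (\prod_(k < K) \prod_(a < A) mu (B k a))%E.

Definition gain_event (B : 'I_K -> 'I_A -> set R) := [set w : T | forall k a, B k a (g k a w)].

Lemma measurable_gain_preimage k a (B : set R) : measurable B -> measurable (g k a @^-1` B).
Proof. by move=> mB; rewrite -[_ @^-1` _]setTI; exact: g_meas. Qed.

Lemma measurable_gain_event B : (forall k a, measurable (B k a)) -> measurable (gain_event B).
Proof.
move=> mB.
have -> : gain_event B = \bigcap_(e in [set: 'I_K * 'I_A]) (g e.1 e.2 @^-1` B e.1 e.2).
  apply/seteqP; split => w /=; first by move=> Bw [k a] _; exact: Bw.
  by move=> Bw k a; exact: (Bw (k, a) I).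
apply: fin_bigcap_measurable; first exact: finite_finset.
by move=> [k a] _; exact: measurable_gain_preimage.
Qed.

Variables (k0 : 'I_K) (a0 : 'I_A).

Definition other_gain_events : set (set T) := [set S | exists B : 'I_K -> 'I_A -> set R,
  [/\ forall k a, measurable (B k a), B k0 a0 = setT & S = gain_event B]].

Definition update_gain_set (B : 'I_K -> 'I_A -> set R) (B0 : set R) k a :=
  if (k == k0) && (a == a0) then B0 else B k a.

Lemma other_gain_events_measurable : other_gain_events `<=` measurable.
Proof. by move=> _ [B [mB _ ->]]; exact: measurable_gain_event. Qed.

Lemma sigma_other_gain_events_measurable : <<s other_gain_events >> `<=` measurable.
Proof.
by apply: smallest_sub; [exact: sigma_algebra_measurable | exact: other_gain_events_measurable].
Qed.

Lemma other_gain_eventsT : other_gain_events setT.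
Proof. by exists (fun _ _ => setT); split => //; apply/seteqP; split. Qed.

(* Both sides are finite measures of [S] that agree on the [setI]-closed generators. *)
Lemma gain_indep (B0 : set R) : measurable B0 -> forall S, <<s other_gain_events >> S ->
  Pr (g k0 a0 @^-1` B0 `&` S) = (mu B0 * Pr S)%E.
Proof.
move=> mB0 S S_other.
have mX := measurable_gain_preimage k0 a0 mB0.
have muB0 : mu B0 = (fine (mu B0))%:E.
  by rewrite fineK // ge0_fin_numE ?measure_ge0 // (le_lt_trans (probability_le1 _ _)) ?ltry.
have muB0_ge0 : 0 <= fine (mu B0) by rewrite fine_ge0 // measure_ge0.
suff : mrestr Pr mX S = mscale (NngNum muB0_ge0) Pr S.
  by rewrite /mrestr /mscale /= setIC -muB0.
apply: (g_sigma_algebra_measure_unique _ other_gain_events_measurable (fun=> setT)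
  (fun=> other_gain_eventsT)) => //.
- by apply/seteqP; split => // x _; exists 0%N.
- move=> _ _ [B [mB B_a0 ->]] [B' [mB' B'_a0 ->]].
  exists (fun k a => B k a `&` B' k a); split; first by move=> k a; apply: measurableI.
    by rewrite B_a0 B'_a0 setTI.
  apply/seteqP; split => w /=; first by move=> [Bw B'w] k a; split.
  by move=> BB'w; split => k a; case: (BB'w k a).
- move=> _ [B [mB B_a0 ->]].
  change (Pr (gain_event B `&` g k0 a0 @^-1` B0) = ((fine (mu B0))%:E * Pr (gain_event B))%E).
  rewrite -muB0.
  have -> : gain_event B `&` g k0 a0 @^-1` B0 = gain_event (update_gain_set B B0).
    apply/seteqP; split => w /=.
      by move=> [Bw B0w] k a; rewrite /update_gain_set; case: andP => [[/eqP -> /eqP ->]|] //.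
    move=> Bw; split; last by have := Bw k0 a0; rewrite /update_gain_set !eqxx.
    move=> k a; have := Bw k a; rewrite /update_gain_set.
    by case: andP => [[/eqP -> /eqP ->]|] //; rewrite B_a0.
  rewrite g_iid; last by move=> k a; rewrite /update_gain_set; case: andP.
  rewrite g_iid // (@big_update _ _ _ _ _ k0 a0 (fun k a => mu (B k a))) /=.
  + by rewrite /update_gain_set !eqxx.
  + move=> k a ka; rewrite /update_gain_set; case: andP => // [[/eqP k_k0 /eqP a_a0]].
    by move: ka; rewrite k_k0 a_a0 !eqxx.
  + by rewrite B_a0 probability_setT.
- move=> _; rewrite /mrestr /=; apply: (le_lt_trans (probability_le1 Pr _)).
    exact: measurableI.
  exact: ltry.
Qed.

Lemma gain_law (B0 : set R) : measurable B0 -> Pr (g k0 a0 @^-1` B0) = mu B0.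
Proof.
move=> mB0; have := gain_indep mB0 (sub_sigma_algebra other_gain_eventsT).
by rewrite setIT probability_setT mule1.
Qed.

End GainIndependence.

Section NullEvents.
Variables (R : realType) (K A : nat) (d : measure_display) (T : measurableType d)
  (Pr : probability T R) (mu : probability R R) (g : 'I_K -> 'I_A -> T -> R).
Hypothesis mu_nonatomic : forall x : R, mu [set y : R | y = x] = 0%E.
Hypothesis mu_pos : mu `]0, +oo[ = 1%E.
Hypothesis g_meas : forall k a, measurable_fun setT (g k a).
Hypothesis g_iid : forall B : 'I_K -> 'I_A -> set R,
  (forall k a, measurable (B k a)) ->
  Pr [set w : T | forall k a, B k a (g k a w)] = (\prod_(k < K) \prod_(a < A) mu (B k a))%E.

(* Cutting the line into [N] cells of [mu]-mass [1/N], the gain and [Z] fall in the same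
   cell with probability [\sum_i (1/N) Pr (Z \in C_i) = 1/N], by independence. *)
Lemma gain_eq_negligible k0 a0 (Z : T -> R) :
  measurable_fun [set: g_sigma_algebraType (other_gain_events g k0 a0)] Z ->
  Pr.-negligible [set w | g k0 a0 w = Z w].
Proof.
move=> mZ.
have Z_other I : measurable I -> <<s other_gain_events g k0 a0 >> (Z @^-1` I).
  by move=> mI; rewrite -[Z @^-1` I]setTI; exact: mZ.
have mZI I : measurable I -> measurable (Z @^-1` I).
  by move=> mI; apply: (sigma_other_gain_events_measurable g_meas); exact: Z_other.
pose D := [set w | g k0 a0 w = Z w].
have mD : measurable D.
  have mZT : measurable_fun setT Z by move=> _ I mI; rewrite setTI; exact: mZI.
  have := measurable_realfun.measurable_fun_eqr (g_meas k0 a0) mZT measurableT (Y := [set true]) I.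
  by rewrite setTI; congr measurable; apply/seteqP; split => w /= /eqP.
have bound N : (0 < N)%N -> (Pr D <= (N%:R^-1)%:E)%E.
  move=> N_gt0; have [C [mC cover disjoint muC]] := nonatomic_partition mu_nonatomic N_gt0.
  pose F i := g k0 a0 @^-1` C i `&` Z @^-1` C i.
  have mF i : measurable (F i).
    by apply: measurableI; [exact: measurable_gain_preimage | exact: mZI].
  have D_F : D `<=` \big[setU/set0]_(i < N) F i.
    move=> w Dw; have [i Ci] := cover (g k0 a0 w).
    by rewrite (bigD1 i) //=; left; split => //; rewrite /= -Dw.
  apply: le_trans (le_measure _ _ _ D_F) _; rewrite ?inE //; first exact: bigsetU_measurable.
  rewrite measure_bigsetU_ord //; last by move=> i j _ _ [w [[Ci _] [Cj _]]]; exact: disjoint Ci Cj.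
  rewrite (eq_bigr (fun i => (N%:R^-1)%:E * Pr (Z @^-1` C i)))%E; last first.
    by move=> i _; rewrite -(muC i); exact: (gain_indep g_meas g_iid (mC i) (Z_other _ (mC i))).
  rewrite -ge0_sume_distrr; last by move=> i _; exact: measure_ge0.
  rewrite -measure_bigsetU_ord; last 2 first.
  - by move=> i; exact: mZI.
  - by move=> i j _ _ [w [Ci Cj]]; exact: disjoint Ci Cj.
  rewrite -[X in (_ <= X)%E]mule1; apply: lee_pmul => //.
  by apply: probability_le1; apply: bigsetU_measurable => i _; exact: mZI.
suff : Pr D = 0%E by move/(negligibleP _ mD).
have PrD : Pr D = (fine (Pr D))%:E.
  by rewrite fineK // ge0_fin_numE ?measure_ge0 // (le_lt_trans (probability_le1 _ _)) ?ltry.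
apply/eqP; rewrite eq_le measure_ge0 andbT PrD lee_fin.
apply: le0_of_forall_le_invSn => n; rewrite -lee_fin -PrD; exact: bound.
Qed.

Lemma gain_nonpos_negligible k a : Pr.-negligible [set w | g k a w <= 0].
Proof.
have nonpos : `]-oo, 0] = ~` `]0, +oo[ :> set R.
  by apply/seteqP; split => x /=; rewrite !in_itv /= andbT leNgt => /negP.
rewrite (_ : [set w | _] = g k a @^-1` `]-oo, 0]); last first.
  by apply/seteqP; split => w /=; rewrite in_itv.
apply/negligibleP; first exact: measurable_gain_preimage.
have itv_meas : measurable (`]-oo, 0] : set R) by exact: measurable_itv.
move: (gain_law g_meas g_iid k a itv_meas) => /= ->.
by rewrite nonpos probability_setC ?mu_pos ?subee //; exact: measurable_itv.
Qed.

(* Solving the relation for the gain [g (h j0)], it equals a function [Z] of the other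
   gains, an event of probability zero by [gain_eq_negligible]. *)
Lemma ln_combination_negligible (J : finType) (h : J -> 'I_K * 'I_A) (c : J -> R) (j0 : J) :
  injective h -> c j0 != 0 ->
  Pr.-negligible [set w | \sum_j c j * ln (g (h j).1 (h j).2 w) = 0].
Proof.
move=> h_inj cj0; set k0 := (h j0).1; set a0 := (h j0).2.
pose GT := g_sigma_algebraType (other_gain_events g k0 a0).
pose Z (w : T) := expR ((- \sum_(j | j != j0) c j * ln (g (h j).1 (h j).2 w)) / c j0).
have mg j : j != j0 -> measurable_fun [set: GT] (g (h j).1 (h j).2).
  move=> jj0 _ I mI; rewrite setTI; apply: sub_sigma_algebra.
  exists (fun k a => if (k, a) == h j then I else setT); split.
  - by move=> k a; case: ifP.
  - rewrite (_ : ((k0, a0) == h j) = false) //; apply/negP => /eqP hj.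
    by move/negP: jj0; apply; apply/eqP/h_inj; rewrite -hj /k0 /a0 -surjective_pairing.
  - apply/seteqP; split => w /=.
      by move=> Iw k a; case: eqP => // kah; move: Iw; rewrite -kah.
    by move=> /(_ (h j).1 (h j).2); rewrite -surjective_pairing eqxx.
have mZ : measurable_fun [set: GT] Z.
  apply: measurableT_comp; first exact: measurable_realfun.measurable_expR.
  apply: measurable_realfun.measurable_funM; last exact: measurable_cst.
  apply: measurableT_comp; first exact: measurable_realfun.oppr_measurable.
  rewrite [X in measurable_fun _ X](_ : _ = fun w : GT => \sum_(j <- index_enum J)
     (if j != j0 then c j * ln (g (h j).1 (h j).2 w) else 0)); last first.
    by apply: funext => w; rewrite big_mkcond.
  apply: (@measurable_sum _ GT R setT J (index_enum J)
    (fun j w => if j != j0 then c j * ln (g (h j).1 (h j).2 w) else 0)) => j.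
  case jj0: (j != j0); last exact: measurable_cst.
  apply: measurable_realfun.measurable_funM; first exact: measurable_cst.
  by apply: measurableT_comp; [exact: measurable_realfun.measurable_ln | exact: mg; rewrite jj0].
have gZ := gain_eq_negligible mZ.
apply: negligibleS (negligibleU gZ (gain_nonpos_negligible k0 a0)) => w /=.
rewrite (bigD1 j0) //= -/k0 -/a0 => combination.
have [g_le0 | g_gt0] := leP (g k0 a0 w) 0; [by right | left].
rewrite /Z (_ : - _ = c j0 * ln (g k0 a0 w)); last by lra.
by rewrite mulrC mulKf // lnK // posrE.
Qed.

Lemma ae_gain_gt0 : {ae Pr, forall w k a, 0 < g k a w}.
Proof.
apply: filter_forall => k; apply: filter_forall => a.
by apply: negligibleS (gain_nonpos_negligible k a) => w /= /negP; rewrite -leNgt.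
Qed.

Lemma ae_not_additive_on (E : {set 'I_K * 'I_A}) : (0 < A)%N ->
  {ae Pr, forall w, (K + A <= #|E|)%N -> ~ additive_on E (fun k a => ln (g k a w))}.
Proof.
move=> A_gt0; have [KAE | _] := leqP (K + A) #|E|; last exact: nearW.
have [u u0 ortho] := additive_on_orthogonal R A_gt0 KAE.
have [i0 ui0] : exists i, u 0 i != 0.
  apply/existsP; apply: contraR u0 => /existsPn u_0; apply/eqP/rowP => i.
  by rewrite mxE; exact/eqP/negPn.
apply: negligibleS
  (ln_combination_negligible (h := enum_val) (c := fun i => u 0 i) enum_val_inj ui0).
move=> w /= not_not; apply: (ortho (fun k a => ln (g k a w))); apply: contrapT => not_add.
by apply: not_not => _; exact: not_add.
Qed.

End NullEvents.

Local Close Scope classical_set_scope.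

Theorem corollary1 (R : realType) (K A : nat) (hA : (0 < A)%N)
  (P : 'I_K -> R) (hP : forall k, 0 < P k)
  (b sigma2 : 'I_A -> R) (hb : forall a, 0 < b a) (hs : forall a, 0 < sigma2 a)
  (d : measure_display) (T : measurableType d) (Pr : probability T R)
  (mu : probability R R)
  (mu_nonatomic : forall x : R, mu [set y : R | y = x]%classic = 0%E)
  (mu_pos : mu `]0, +oo[%classic = 1%E)
  (g : 'I_K -> 'I_A -> T -> R)
  (g_meas : forall k a, measurable_fun setT (g k a))
  (g_iid : forall B : 'I_K -> 'I_A -> set R,
      (forall k a, measurable (B k a)) ->
      Pr [set w : T | forall k a, B k a (g k a w)]%classic
      = (\prod_(k < K) \prod_(a < A) mu (B k a))%E) :
  {ae Pr, forall w, forall p : profile R K A,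
      nash_eq P b sigma2 (fun k a => g k a w) p ->
      (\sum_(k < K) (#|supp (p k)| - 1) <= A - 1)%N}.

Proof.
near=> w => p nash.
have g_gt0 : forall k a, 0 < g k a w by near: w; exact: (ae_gain_gt0 mu_pos g_meas g_iid).
have not_additive : forall E : {set 'I_K * 'I_A},
    (K + A <= #|E|)%N -> ~ additive_on E (fun k a => ln (g k a w)).
  near: w; apply: filter_forall => E.
  exact: (ae_not_additive_on mu_nonatomic mu_pos g_meas g_iid E hA).
rewrite leqNgt; apply/negP => too_many.
apply: (not_additive (support_pairs p)); last exact: nash_ln_additive hb hs g_gt0 nash.
rewrite -(card_support_pairs_subn1 hP (proj1 nash)) addnC leq_add2r.
by move: too_many; rewrite subn1 prednK.
Unshelve. all: by end_near.
Qed.
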